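(* Let $L^{(2)}_N$ be the number of leaves of the $B$-tree of order $5$ (i.e. $m=2$) obtained by inserting the keys $\pi(1),\dots,\pi(N)$ successively into an empty tree, where $\pi$ is a uniformly random permutation in $S_N$. Then \[ \mathbb E\big(L^{(2)}_N\big)=\frac{10(N+1)}{37}+O\big(N^{-13/2}\big)\qquad (N\to\infty). \]
   Context: A $B$-tree of order $2m+1$ is a rooted plane search tree whose nodes contain pairwise distinct keys in increasing left-to-right order (a non-leaf node with $k$ keys has $k+1$ children), every non-root node has between $m$ and $2m$ keys, the root between $1$ and $2m$, and all leaves have equal depth. Insertion: place the new key in the appropriate leaf; whenever a node has $2m+1$ keys, split it, moving the median key up into the parent and forming two nodes from the $m$ smallest and the $m$ largest keys (creating a new one-key root if the root splits). *)

From mathcomp Require Import all_boot all_fingroup.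
From Stdlib Require Import Reals.

Set Implicit Arguments.
Unset Strict Implicit.
Unset Printing Implicit Defensive.

(* A B-tree node: its sorted list of keys and its list of children
   (empty list of children = leaf). The empty tree is [Node [::] [::]]. *)
Inductive btree := Node of seq nat & seq btree.

(* result of inserting into a subtree: either the subtree absorbed the key,
   or it split into (left, median, right). *)
Inductive ires := Fit of btree | Split of btree & nat & btree.

Definition insert_at (i x : nat) (s : seq nat) : seq nat :=
  take i s ++ x :: drop i s.

(* Build a node of a B-tree of order 2m+1; if it overflows (2m+1 keys),
   split it: the m smallest keys (with their m+1 children), the median,
   and the m largest keys (with their m+1 children). *)
Definition mk_node (m : nat) (ks : seq nat) (cs : seq btree) : ires :=
  if size ks == (2 * m).+1 then
    Split (Node (take m ks) (take m.+1 cs)) (nth 0 ks m)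
          (Node (drop m.+1 ks) (drop m.+1 cs))
  else Fit (Node ks cs).

Fixpoint ins (m x : nat) (t : btree) {struct t} : ires :=
  match t with
  | Node ks cs =>
    let i := count (fun k => k < x) ks in
    if cs is [::] then mk_node m (insert_at i x ks) [::]
    else
      let fix upd (j : nat) (cs : seq btree) {struct cs} : seq btree * option nat :=
        match cs with
        | [::] => ([::], None)
        | c :: cs' =>
          if j is j'.+1 then
            let (r, o) := upd j' cs' in (c :: r, o)
          else match ins m x c with
               | Fit c' => (c' :: cs', None)
               | Split l k r => (l :: r :: cs', Some k)
               end
        end in
      let (cs', o) := upd i cs in
      match o with
      | None => Fit (Node ks cs')
      | Some k => mk_node m (insert_at i k ks) cs'
      end
  end.

Definition binsert (m x : nat) (t : btree) : btree :=
  match ins m x t with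
  | Fit t' => t'
  | Split l k r => Node [:: k] [:: l; r]
  end.

Definition empty_btree : btree := Node [::] [::].

Definition build (m : nat) (s : seq nat) : btree :=
  foldl (fun t x => binsert m x t) empty_btree s.

Fixpoint nleaves (t : btree) : nat :=
  match t with
  | Node _ cs =>
    if cs is [::] then 1
    else (fix go (cs : seq btree) : nat :=
            match cs with [::] => 0 | c :: cs' => nleaves c + go cs' end) cs
  end.

(* the key sequence pi(1), ..., pi(N) for pi in S_N (values in {1..N}) *)
Definition perm_keys (N : nat) (p : 'S_N) : seq nat :=
  [seq (p i).+1 | i <- enum 'I_N].

Definition Lm (m N : nat) (p : 'S_N) : nat := nleaves (build m (perm_keys p)).

Definition ELm (m N : nat) : R :=
  (INR (\sum_(p : 'S_N) Lm m p) / INR (N`!))%R.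

From Pilot Require Import Defs.
From mathcomp Require Import all_boot all_fingroup zify.
From Stdlib Require Import Reals Lra.

Set Implicit Arguments.
Unset Strict Implicit.
Unset Printing Implicit Defensive.

(* Fringe analysis.  Inserting a key of rank r into a B-tree of order 2m+1 changes the
   left-to-right sequence of leaf sizes only at the leaf holding the r-th gap: that leaf
   gains a key, and a leaf with 2m keys becomes two leaves with m keys (splits of internal
   nodes do not touch the leaves).  In a uniformly random permutation the last key has a
   uniform rank, independent of the relative order of the others, so the expected numbers
   mu_j(N) of leaves with j keys satisfy a linear recurrence.
   For m = 2 and N >= 2 every leaf has at least 2 keys, and counting gaps gives
   3 mu_2 + 4 mu_3 + 5 mu_4 = N + 1.  The deviation (a, b) of (mu_2, mu_3) from
   (5, 3)(N + 1)/37 then shrinks, in the positive definite form 3a^2 + 5ab + 8b^2, by the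
   factor 1 - 13/(N+1) + 60/(N+1)^2 at each step, so that form is O(N^-13); and
   mu_2 + mu_3 + mu_4 - 10(N + 1)/37 = (2a + b)/5. *)

(** * B-trees: in-order keys and leaf sizes *)

Definition btree_nested_ind (P : btree -> Prop)
    (IH : forall ks cs, List.Forall P cs -> P (Node ks cs)) : forall t, P t :=
  fix F t := let: Node ks cs := t in IH ks cs
    ((fix G (cs : seq btree) : List.Forall P cs :=
       if cs is c :: cs' then List.Forall_cons c (F c) (G cs') else List.Forall_nil P) cs).

Fixpoint interleave (ss : seq (seq nat)) (ks : seq nat) : seq nat :=
  match ss with
  | [::] => [::]
  | s :: ss' => s ++ (if ks is k :: ks' then k :: interleave ss' ks' else [::])
  end.

Fixpoint inorder (t : btree) : seq nat :=
  let: Node ks cs := t in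
  if cs is [::] then ks else interleave (map inorder cs) ks.

Fixpoint leaf_sizes (t : btree) : seq nat :=
  let: Node ks cs := t in
  if cs is [::] then [:: size ks] else flatten (map leaf_sizes cs).

Fixpoint btree_wf (m : nat) (t : btree) : bool :=
  let: Node ks cs := t in
  (size ks <= 2 * m) &&
  (if cs is [::] then true else (size cs == (size ks).+1) && all (btree_wf m) cs).

Lemma inorder_node ks cs : 0 < size cs ->
  inorder (Node ks cs) = interleave (map inorder cs) ks.
Proof. by case: cs. Qed.

Lemma leaf_sizes_node ks cs : 0 < size cs ->
  leaf_sizes (Node ks cs) = flatten (map leaf_sizes cs).
Proof. by case: cs. Qed.

Lemma btree_wf_node m ks cs : 0 < size cs ->
  btree_wf m (Node ks cs) =
  [&& size ks <= 2 * m, size cs == (size ks).+1 & all (btree_wf m) cs].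
Proof. by case: cs. Qed.

Lemma inorder_leaf ks : inorder (Node ks [::]) = ks.
Proof. by []. Qed.

Lemma leaf_sizes_leaf ks : leaf_sizes (Node ks [::]) = [:: size ks].
Proof. by []. Qed.

Lemma btree_wf_leaf m ks : btree_wf m (Node ks [::]) = (size ks <= 2 * m).
Proof. by rewrite /= andbT. Qed.

Arguments inorder : simpl never.
Arguments leaf_sizes : simpl never.
Arguments btree_wf : simpl never.

Lemma nleaves_inner ks c cs :
  nleaves (Node ks (c :: cs)) = sumn (map nleaves (c :: cs)).
Proof. by rewrite /=; congr addn; elim: cs => //= c' cs ->. Qed.

Lemma nleaves_leaf_sizes t : nleaves t = size (leaf_sizes t).
Proof.
elim/btree_nested_ind: t => ks [|c cs] IH //.
rewrite nleaves_inner leaf_sizes_node //.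
elim: (c :: cs) IH => [|c' cs' IHcs] // /List.Forall_cons_iff [IHc IH] /=.
by rewrite size_cat IHc IHcs.
Qed.

Lemma size_interleave ss ks : size ss = (size ks).+1 ->
  size (interleave ss ks) = sumn (map size ss) + size ks.
Proof.
elim: ss ks => [|s ss IH] [|k ks] //= [e].
  by move/size0nil: e => ->; rewrite /= cats0 !addn0.
by rewrite size_cat /= IH //; lia.
Qed.

Lemma interleave_split ss ks i : size ss = (size ks).+1 -> i < size ks ->
  interleave ss ks = interleave (take i.+1 ss) (take i ks)
                     ++ nth 0 ks i :: interleave (drop i.+1 ss) (drop i.+1 ks).
Proof.
elim: ss ks i => [|s ss IH] [|k ks] [|i] //= [e] lt_i; first by rewrite cats0 !drop0.
by rewrite (IH ks i) // -catA.
Qed.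

Lemma subseq_interleave ss ks : size ss = (size ks).+1 -> subseq ks (interleave ss ks).
Proof.
elim: ss ks => [|s ss IH] [|k ks] //= [e]; first exact: sub0seq.
by rewrite -[k :: ks]/([::] ++ k :: ks) cat_subseq ?sub0seq //= eqxx IH.
Qed.

Lemma size_insert_at i x s : size (insert_at i x s) = (size s).+1.
Proof. by rewrite /insert_at size_cat /= addnS -size_cat cat_take_drop. Qed.

Lemma perm_insert_at i x s : perm_eq (insert_at i x s) (x :: s).
Proof. by have := perm_catCA (take i s) [:: x] (drop i s); rewrite /= cat_take_drop => ->. Qed.

Lemma insert_at_catl i x s1 s2 : i <= size s1 ->
  insert_at i x (s1 ++ s2) = insert_at i x s1 ++ s2.
Proof.
move=> le_i; rewrite /insert_at take_cat drop_cat.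
case: ltnP => [_|ge_i]; first by rewrite -catA.
have -> : i = size s1 by apply/eqP; rewrite eqn_leq le_i.
by rewrite subnn take0 drop0 take_size drop_size cats0 -catA.
Qed.

Lemma insert_at_catr i x s1 s2 :
  insert_at (size s1 + i) x (s1 ++ s2) = s1 ++ insert_at i x s2.
Proof. by rewrite /insert_at take_cat drop_cat ltnNge leq_addr /= addKn -catA. Qed.

Lemma count_lt_sorted x k s : sorted ltn (k :: s) -> x <= k ->
  count (fun y => y < x) (k :: s) = 0.
Proof.
move=> sorted_ks le_xk; apply/eqP; rewrite -leqn0 leqNgt -has_count.
move: sorted_ks; rewrite (sorted_pairwise ltn_trans) pairwise_cons => /andP [/allP lt_k _].
apply/hasPn => y; rewrite -leqNgt => /predU1P [-> //|/lt_k lt_ky].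
exact: leq_trans le_xk (ltnW lt_ky).
Qed.

Lemma sorted_insert_at x s : sorted ltn s -> x \notin s ->
  sorted ltn (insert_at (count (fun k => k < x) s) x s).
Proof.
elim: s => [|a s IH] //= sorted_as; rewrite inE negb_or => /andP [ne_xa x_s].
have sorted_s : sorted ltn s := path_sorted sorted_as.
case: (ltnP a x) => [lt_ax|le_xa] /=.
- rewrite add0n -/(insert_at _ x s) path_sortedE; last exact: ltn_trans.
  rewrite IH // andbT (perm_all _ (perm_insert_at _ _ _)) /= lt_ax.
  by move: sorted_as; rewrite path_sortedE; [case/andP|exact: ltn_trans].
- have := count_lt_sorted sorted_as le_xa; rewrite /= ltnNge le_xa add0n => ->.
  by rewrite /insert_at /= sorted_as andbT ltn_neqAle le_xa ne_xa.
Qed.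

(** * Fringe analysis of one insertion *)

Definition slots (z : seq nat) : nat := sumn [seq a.+1 | a <- z].

Definition grow_leaf (m a : nat) : seq nat :=
  if a == 2 * m then [:: m; m] else [:: a.+1].

(* A leaf with [a] keys offers [a.+1] gaps; [r] is the rank of the gap receiving the key. *)
Fixpoint fringe_insert (m r : nat) (z : seq nat) : seq nat :=
  if z is a :: z' then
    if r <= a then grow_leaf m a ++ z' else a :: fringe_insert m (r - a.+1) z'
  else [::].

Lemma slots_cat z1 z2 : slots (z1 ++ z2) = slots z1 + slots z2.
Proof. by rewrite /slots map_cat sumn_cat. Qed.

Lemma fringe_insert_catl m r z1 z2 : r < slots z1 ->
  fringe_insert m r (z1 ++ z2) = fringe_insert m r z1 ++ z2.
Proof.
elim: z1 r => [|a z1 IH] r //= lt_r; case: leqP => [_|lt_ar]; first by rewrite catA.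
by rewrite IH //; move: lt_r; rewrite /slots /=; lia.
Qed.

Lemma fringe_insert_catr m r z1 z2 :
  fringe_insert m (slots z1 + r) (z1 ++ z2) = z1 ++ fringe_insert m r z2.
Proof.
elim: z1 r => [|a z1 IH] r //=.
rewrite /slots /= -addnA leqNgt ltnS leq_addr /=.
by rewrite addSn subSS addKn IH.
Qed.

Lemma slots_leaf_sizes m t : btree_wf m t -> slots (leaf_sizes t) = (size (inorder t)).+1.
Proof.
elim/btree_nested_ind: t => ks [|c cs] IH.
  by rewrite leaf_sizes_leaf inorder_leaf /slots /= addn0.
rewrite btree_wf_node // inorder_node // leaf_sizes_node // => /and3P [_ /eqP size_cs wf_cs].
rewrite size_interleave ?size_map // -addnS -size_cs.
elim: (c :: cs) IH wf_cs {size_cs} => [|c' cs' IHcs] //= /List.Forall_cons_iff [IHc IH].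
by case/andP=> wf_c wf_cs; rewrite slots_cat IHc // IHcs //; lia.
Qed.

Lemma leaf_sizes_bounded m t : btree_wf m t -> all (fun a => a <= 2 * m) (leaf_sizes t).
Proof.
elim/btree_nested_ind: t => ks [|c cs] IH.
  by rewrite leaf_sizes_leaf btree_wf_leaf /= andbT.
rewrite btree_wf_node // leaf_sizes_node // => /and3P [_ _].
elim: (c :: cs) IH => [|c' cs' IHcs] //= /List.Forall_cons_iff [IHc IH].
by case/andP=> wf_c wf_cs; rewrite all_cat IHc // IHcs.
Qed.

Definition ires_trees (res : ires) : seq btree :=
  match res with Fit t => [:: t] | Defs.Split l _ r => [:: l; r] end.

Definition ires_median (res : ires) : option nat :=
  if res is Defs.Split _ k _ then Some k else None.

Definition ires_keys (res : ires) : seq nat :=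
  match res with Fit t => inorder t | Defs.Split l k r => inorder l ++ k :: inorder r end.

Definition ires_leaf_sizes (res : ires) : seq nat :=
  flatten (map leaf_sizes (ires_trees res)).

Lemma mk_node_leaf_spec m ks : 0 < size ks <= (2 * m).+1 ->
  let res := mk_node m ks [::] in
  [/\ all (btree_wf m) (ires_trees res), ires_keys res = ks
    & ires_leaf_sizes res = grow_leaf m (size ks).-1].
Proof.
rewrite /mk_node /grow_leaf /ires_leaf_sizes => /andP [pos_ks le_ks].
case: eqP => [size_ks|ne_ks] /=; rewrite ?btree_wf_leaf ?inorder_leaf ?leaf_sizes_leaf.
  rewrite size_ks eqxx -(@drop_nth _ 0 m ks) ?size_ks; last lia.
  rewrite cat_take_drop size_takel ?size_drop size_ks; last lia.
  have -> : (2 * m).+1 - m.+1 = m by lia.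
  by split=> //=; rewrite leq_pmull.
have -> : ((size ks).-1 == 2 * m) = false by apply/negbTE; lia.
by rewrite prednK //; split=> //=; rewrite andbT; lia.
Qed.

Lemma mk_node_inner_spec m ks cs : size ks <= (2 * m).+1 ->
  size cs = (size ks).+1 -> all (btree_wf m) cs ->
  let res := mk_node m ks cs in
  [/\ all (btree_wf m) (ires_trees res), ires_keys res = interleave (map inorder cs) ks
    & ires_leaf_sizes res = flatten (map leaf_sizes cs)].
Proof.
move=> le_ks size_cs wf_cs; rewrite /mk_node /ires_leaf_sizes.
have pos_cs : 0 < size cs by rewrite size_cs.
case: eqP => [size_ks|ne_ks] /=; last first.
  rewrite inorder_node // leaf_sizes_node // btree_wf_node // size_cs eqxx wf_cs cats0.
  by split=> //; rewrite !andbT; lia.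
have lt_m : m < size ks by rewrite size_ks; lia.
have size_take_cs : size (take m.+1 cs) = m.+1 by rewrite size_takel // size_cs; lia.
have size_drop_cs : size (drop m.+1 cs) = m.+1 by rewrite size_drop size_cs size_ks; lia.
have size_drop_ks : size (drop m.+1 ks) = m by rewrite size_drop size_ks; lia.
move: wf_cs; rewrite -{1}(cat_take_drop m.+1 cs) all_cat => /andP [wf_l wf_r].
rewrite !inorder_node ?leaf_sizes_node ?btree_wf_node ?size_take_cs ?size_drop_cs //.
split.
- by rewrite size_takel ?size_drop_ks ?wf_l ?wf_r ?eqxx //=; lia.
- by rewrite (interleave_split _ lt_m) ?size_map // !map_take !map_drop.
- by rewrite cats0 -flatten_cat -map_cat cat_take_drop.
Qed.

(* The child-update loop of [ins], verbatim, so that [ins] unfolds to it. *)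
Definition ins_child (m x : nat) :=
  fix upd (j : nat) (cs : seq btree) {struct cs} : seq btree * option nat :=
    match cs with
    | [::] => ([::], None)
    | c :: cs' =>
      if j is j'.+1 then let (r, o) := upd j' cs' in (c :: r, o)
      else match ins m x c with
           | Fit c' => (c' :: cs', None)
           | Defs.Split l k r => (l :: r :: cs', Some k)
           end
    end.

Definition opt_insert (i : nat) (o : option nat) (ks : seq nat) : seq nat :=
  if o is Some k then insert_at i k ks else ks.

Lemma size_opt_insert i o ks : size (opt_insert i o ks) = size ks + (o != None).
Proof. by case: o => [k|] /=; rewrite ?size_insert_at ?addn1 ?addn0. Qed.

Lemma opt_insert_cons i o k ks : opt_insert i.+1 o (k :: ks) = k :: opt_insert i o ks.
Proof. by case: o. Qed.

Lemma ins_child_head m x c cs :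
  ins_child m x 0 (c :: cs) = (ires_trees (ins m x c) ++ cs, ires_median (ins m x c)).
Proof. by rewrite /=; case: ins. Qed.

Lemma ins_child_behead m x i c cs :
  ins_child m x i.+1 (c :: cs) = (c :: (ins_child m x i cs).1, (ins_child m x i cs).2).
Proof. by rewrite /=; case: (ins_child m x i cs). Qed.

Lemma ins_leaf m x ks :
  ins m x (Node ks [::]) = mk_node m (insert_at (count (fun k => k < x) ks) x ks) [::].
Proof. by []. Qed.

Lemma ins_inner m x ks cs : 0 < size cs -> size ks <= 2 * m ->
  let i := count (fun k => k < x) ks in
  ins m x (Node ks cs) =
  mk_node m (opt_insert i (ins_child m x i cs).2 ks) (ins_child m x i cs).1.
Proof.
move=> pos_cs le_ks i.
case: cs pos_cs => [//|c cs] _.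
have -> : ins m x (Node ks (c :: cs)) = let (cs', o) := ins_child m x i (c :: cs) in
  if o is Some k then mk_node m (insert_at i k ks) cs' else Fit (Node ks cs') by [].
case: ins_child => cs' [k|] //=.
by rewrite /mk_node ifN_eq //; apply/eqP; lia.
Qed.

Definition insertion_correct m x t (res : ires) : Prop :=
  let r := count (fun k => k < x) (inorder t) in
  [/\ all (btree_wf m) (ires_trees res), ires_keys res = insert_at r x (inorder t)
    & ires_leaf_sizes res = fringe_insert m r (leaf_sizes t)].

Definition insertion_sound m x t : Prop :=
  btree_wf m t -> sorted ltn (inorder t) -> x \notin inorder t ->
  insertion_correct m x t (ins m x t).

Definition children_correct m x i ks cs (res : seq btree * option nat) : Prop :=
  let r := count (fun k => k < x) (interleave (map inorder cs) ks) in
  let ks' := opt_insert i res.2 ks in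
  [/\ all (btree_wf m) res.1, size res.1 = (size ks').+1,
      interleave (map inorder res.1) ks' = insert_at r x (interleave (map inorder cs) ks)
    & flatten (map leaf_sizes res.1) = fringe_insert m r (flatten (map leaf_sizes cs))].

Lemma sorted_ltn_cat s1 s2 :
  sorted ltn (s1 ++ s2) = [&& allrel ltn s1 s2, sorted ltn s1 & sorted ltn s2].
Proof. by rewrite !(sorted_pairwise ltn_trans) pairwise_cat. Qed.

(* [interleave ([::] :: ss) ks] is what follows the first block. *)
Lemma interleave_cons s ss ks : interleave (s :: ss) ks = s ++ interleave ([::] :: ss) ks.
Proof. by []. Qed.

Lemma interleave_ires res ss ks :
  interleave (map inorder (ires_trees res) ++ ss) (opt_insert 0 (ires_median res) ks) =
  ires_keys res ++ interleave ([::] :: ss) ks.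
Proof. by case: res => [t|l k r] //=; rewrite /insert_at take0 drop0 /= -catA. Qed.

Lemma ins_child_head_spec m x c cs ks :
  insertion_sound m x c -> btree_wf m c -> all (btree_wf m) cs -> size cs = size ks ->
  let tail := interleave ([::] :: map inorder cs) ks in
  sorted ltn (inorder c ++ tail) -> x \notin inorder c ++ tail ->
  count (fun k => k < x) tail = 0 ->
  children_correct m x 0 ks (c :: cs) (ins_child m x 0 (c :: cs)).
Proof.
move=> sound_c wf_c wf_cs size_cs tail; rewrite sorted_ltn_cat mem_cat negb_or.
case/and3P=> _ sorted_c _ /andP [x_c _] count_tail.
have [wf_res keys_res leaves_res] := sound_c wf_c sorted_c x_c.
have r_lt : count (fun k => k < x) (inorder c) < slots (leaf_sizes c).
  by rewrite (slots_leaf_sizes wf_c) ltnS count_size.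
rewrite ins_child_head /children_correct (interleave_cons (inorder c)).
rewrite count_cat count_tail addn0.
split.
- by rewrite all_cat wf_res.
- by rewrite size_cat size_opt_insert size_cs; case: (ins m x c) => /=; lia.
- by rewrite map_cat interleave_ires keys_res insert_at_catl // count_size.
- by rewrite map_cat flatten_cat -/(ires_leaf_sizes _) leaves_res -fringe_insert_catl.
Qed.

Lemma ins_child_spec m x ks cs :
  List.Forall (insertion_sound m x) cs -> size cs = (size ks).+1 -> all (btree_wf m) cs ->
  sorted ltn (interleave (map inorder cs) ks) -> x \notin interleave (map inorder cs) ks ->
  let i := count (fun k => k < x) ks in children_correct m x i ks cs (ins_child m x i cs).
Proof.
elim: cs ks => [|c cs IH] ks // /List.Forall_cons_iff [sound_c sound_cs] [size_cs].
case/andP=> wf_c wf_cs; rewrite (interleave_cons (inorder c)) => sorted_ks x_ks i.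
case: ks size_cs @i sorted_ks x_ks => [|k0 ks] size_cs i sorted_ks x_ks.
  exact: ins_child_head_spec.
move: sorted_ks x_ks.
rewrite -[interleave ([::] :: _) _]/(k0 :: interleave (map inorder cs) ks).
set W := interleave _ ks => sorted_ks x_ks.
have := sorted_ks; rewrite sorted_ltn_cat => /and3P [c_lt_k0 _ sorted_k0W].
have [lt_k0x|le_xk0] := ltnP k0 x; last first.
  have -> : i = 0.
    apply: count_lt_sorted le_xk0; apply: (subseq_sorted ltn_trans) sorted_k0W.
    by rewrite /= eqxx subseq_interleave ?size_map.
  exact: ins_child_head_spec sound_c wf_c wf_cs size_cs sorted_ks x_ks
           (count_lt_sorted sorted_k0W le_xk0).
have sorted_W : sorted ltn W := path_sorted sorted_k0W.
have x_W : x \notin W by move: x_ks; rewrite mem_cat !inE !negb_or => /and3P [].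
have count_c : count (fun k => k < x) (inorder c) = size (inorder c).
  apply/eqP; rewrite -all_count; apply/allP => y y_c.
  by apply: ltn_trans lt_k0x; move/allrelP: c_lt_k0 => /(_ y k0 y_c); rewrite inE eqxx; apply.
set i' := count (fun k => k < x) ks.
have : children_correct m x i' ks cs (ins_child m x i' cs).
  exact: IH ks sound_cs size_cs wf_cs sorted_W x_W.
have -> : i = i'.+1 by rewrite /i /= lt_k0x.
rewrite ins_child_behead; case: (ins_child m x i' cs) => cs2 o [wf2 size2 keys2 leaves2].
have count_tail : count (fun k => k < x) (inorder c ++ k0 :: W) =
    size (inorder c ++ [:: k0]) + count (fun k => k < x) W.
  by rewrite count_cat count_c /= lt_k0x size_cat addnA.
rewrite /children_correct ![(_, _).1]/= ![(_, _).2]/= opt_insert_cons.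
rewrite -[interleave _ (k0 :: ks)]/(inorder c ++ k0 :: W) count_tail.
split.
- exact/andP.
- by rewrite /= size2.
- rewrite -[interleave _ (k0 :: _)]/
    (inorder c ++ k0 :: interleave (map inorder cs2) (opt_insert i' o ks)).
  by rewrite keys2 -[_ ++ k0 :: W]/(_ ++ [:: k0] ++ W) catA insert_at_catr -catA.
- rewrite -[flatten (map _ (c :: cs))]/(leaf_sizes c ++ flatten (map leaf_sizes cs)).
  rewrite -[flatten (map _ (c :: cs2))]/(leaf_sizes c ++ flatten (map leaf_sizes cs2)).
  by rewrite size_cat addn1 -(slots_leaf_sizes wf_c) fringe_insert_catr leaves2.
Qed.

Lemma ins_sound m x t : insertion_sound m x t.
Proof.
elim/btree_nested_ind: t => ks [|c cs] IH wf_t sorted_t x_t.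
  move: wf_t; rewrite /insertion_correct ins_leaf inorder_leaf leaf_sizes_leaf btree_wf_leaf.
  move=> le_ks; have le_r := count_size (fun k => k < x) ks.
  have [|wf_res keys_res leaves_res] :=
    @mk_node_leaf_spec m (insert_at (count (fun k => k < x) ks) x ks).
    by rewrite size_insert_at ltnS.
  by split=> //; rewrite leaves_res size_insert_at /= le_r cats0.
move: wf_t sorted_t x_t; rewrite btree_wf_node // inorder_node //.
move=> /and3P [le_ks /eqP size_cs wf_cs] sorted_t x_t.
have [wf2 size2 keys2 leaves2] := ins_child_spec IH size_cs wf_cs sorted_t x_t.
rewrite /insertion_correct ins_inner // inorder_node // leaf_sizes_node //.
have [|wf_res keys_res leaves_res] := mk_node_inner_spec _ size2 wf2.
  by rewrite size_opt_insert; case: (_ != _); lia.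
by split=> //; rewrite ?keys_res ?leaves_res.
Qed.

Lemma binsert_sound m x t :
  0 < m -> btree_wf m t -> sorted ltn (inorder t) -> x \notin inorder t ->
  let r := count (fun k => k < x) (inorder t) in
  [/\ btree_wf m (binsert m x t), inorder (binsert m x t) = insert_at r x (inorder t)
    & leaf_sizes (binsert m x t) = fringe_insert m r (leaf_sizes t)].
Proof.
move=> pos_m wf_t sorted_t x_t; have := ins_sound wf_t sorted_t x_t.
rewrite /binsert /insertion_correct /ires_leaf_sizes.
case: (ins m x t) => [t'|l k r] [/= wf_res keys_res leaves_res].
  by rewrite andbT in wf_res; rewrite -leaves_res cats0.
rewrite btree_wf_node // inorder_node // leaf_sizes_node //= -leaves_res cats0 -keys_res cats0.
by move: wf_res; rewrite andbT => /andP [-> ->]; split=> //; rewrite andbT; lia.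
Qed.

Lemma build_rcons m s x : build m (rcons s x) = binsert m x (build m s).
Proof. by rewrite /build foldl_rcons. Qed.

Lemma build_sound m s : 0 < m -> uniq s ->
  [/\ btree_wf m (build m s), sorted ltn (inorder (build m s))
    & perm_eq (inorder (build m s)) s].
Proof.
move=> pos_m; elim/last_ind: s => [|s x IH].
  by rewrite /build /empty_btree btree_wf_leaf.
rewrite rcons_uniq => /andP [x_s uniq_s]; have [wf_t sorted_t perm_t] := IH uniq_s.
have x_t : x \notin inorder (build m s) by rewrite (perm_mem perm_t).
rewrite build_rcons; have [wf' -> _] := binsert_sound pos_m wf_t sorted_t x_t.
split=> //; first exact: sorted_insert_at.
apply: perm_trans (perm_insert_at _ _ _) _.
by rewrite perm_sym perm_rcons perm_cons perm_sym.
Qed.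

Lemma leaf_sizes_build_rcons m s x : 0 < m -> uniq (rcons s x) ->
  leaf_sizes (build m (rcons s x)) =
  fringe_insert m (count (fun k => k < x) s) (leaf_sizes (build m s)).
Proof.
move=> pos_m uniq_sx; move: (uniq_sx); rewrite rcons_uniq => /andP [x_s uniq_s].
have [wf_t sorted_t perm_t] := build_sound pos_m uniq_s.
have x_t : x \notin inorder (build m s) by rewrite (perm_mem perm_t).
rewrite build_rcons; have [_ _ ->] := binsert_sound pos_m wf_t sorted_t x_t.
by rewrite (seq.permP perm_t).
Qed.

Lemma leaf_sizes_build_relabel m f s : 0 < m -> {mono f : a b / a < b} -> uniq s ->
  leaf_sizes (build m (map f s)) = leaf_sizes (build m s).
Proof.
move=> pos_m mono_f.
have inj_f : injective f by apply/incn_inj/leq_mono => a b; rewrite mono_f.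
elim/last_ind: s => [//|s x IH] uniq_sx.
move: (uniq_sx); rewrite rcons_uniq => /andP [_ uniq_s].
rewrite map_rcons !leaf_sizes_build_rcons // ?IH //; last by rewrite -map_rcons map_inj_uniq.
by rewrite count_map; congr fringe_insert; apply: eq_count => y /=; rewrite mono_f.
Qed.

(** * Random permutations *)

Lemma uniq_perm_keys N (p : 'S_N) : uniq (perm_keys p).
Proof.
rewrite /perm_keys map_inj_uniq ?enum_uniq // => i j [] eq_ij.
by apply: (@perm_inj _ p); apply: val_inj.
Qed.

Lemma perm_keys_iota N (p : 'S_N) : perm_eq (perm_keys p) (iota 1 N).
Proof.
apply: uniq_perm; [exact: uniq_perm_keys | exact: iota_uniq | move=> y].
rewrite mem_iota add1n; apply/mapP/idP => [[i _ ->]|/andP [pos_y lt_y]].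
  exact: ltn_ord.
have lt_y1 : y.-1 < N by lia.
exists ((p^-1)%g (Ordinal lt_y1)); first by rewrite mem_enum.
by rewrite permKV /=; lia.
Qed.

Lemma count_lt_perm_keys N (p : 'S_N) v : v <= N ->
  count (fun k => k < v.+1) (perm_keys p) = v.
Proof.
move=> le_vN; rewrite (seq.permP (perm_keys_iota p)) -(subnKC le_vN) iotaD count_cat.
rewrite (eq_in_count (a2 := predT)) ?count_predT ?size_iota; last first.
  by move=> y; rewrite mem_iota add1n => /andP [].
rewrite (eq_in_count (a2 := pred0)) ?count_pred0 ?addn0 // => y.
by rewrite mem_iota => /andP [le_y _]; apply/negbTE; rewrite -leqNgt; lia.
Qed.

Lemma perm_keys_lift N (q : 'S_N) (v : 'I_N.+1) :
  perm_keys (lift_perm ord_max v q) = rcons (map (bump v.+1) (perm_keys q)) v.+1.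
Proof.
rewrite /perm_keys enum_ordSr map_rcons lift_perm_id -!map_comp; congr rcons.
apply: eq_map => j /=.
have -> : widen_ord (leqnSn N) j = lift ord_max j.
  by apply: val_inj; rewrite /= /bump leqNgt ltn_ord.
by rewrite lift_perm_lift /= bumpS.
Qed.

Definition leaf_profile m N (p : 'S_N) : seq nat := leaf_sizes (build m (perm_keys p)).

Lemma slots_leaf_profile m N (p : 'S_N) : 0 < m -> slots (leaf_profile m p) = N.+1.
Proof.
move=> pos_m; have [wf_t _ perm_t] := build_sound pos_m (uniq_perm_keys p).
by rewrite /leaf_profile (slots_leaf_sizes wf_t) (perm_size perm_t) size_map size_enum_ord.
Qed.

Lemma leaf_profile_bounded m N (p : 'S_N) : 0 < m ->
  all (fun a => a <= 2 * m) (leaf_profile m p).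
Proof.
move=> pos_m; have [wf_t _ _] := build_sound pos_m (uniq_perm_keys p).
exact: leaf_sizes_bounded.
Qed.

Lemma leaf_profile_lift m N (q : 'S_N) (v : 'I_N.+1) : 0 < m ->
  leaf_profile m (lift_perm ord_max v q) = fringe_insert m v (leaf_profile m q).
Proof.
have mono_bump : {mono bump v.+1 : a b / a < b}.
  by move=> a b; rewrite /bump; case: (leqP v.+1 a); case: (leqP v.+1 b) => /=; lia.
move=> pos_m; rewrite /leaf_profile perm_keys_lift leaf_sizes_build_rcons //; last first.
  have inj_bump : injective (bump v.+1) by apply/incn_inj/leq_mono => a b; rewrite mono_bump.
  rewrite rcons_uniq (map_inj_uniq inj_bump) uniq_perm_keys andbT.
  by apply/mapP => -[y _]; rewrite /bump; case: leqP => /=; lia.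
rewrite leaf_sizes_build_relabel ?uniq_perm_keys // count_map.
rewrite (eq_count (a2 := fun k => k < v.+1)) ?count_lt_perm_keys //; first exact: ltn_ord v.
by move=> y /=; rewrite /bump; case: leqP => /=; lia.
Qed.

Lemma lift_perm_bij N : bijective (fun qv : 'S_N * 'I_N.+1 => lift_perm ord_max qv.2 qv.1).
Proof.
apply: inj_card_bij; last by rewrite card_prod !card_Sn card_ord factS mulnC.
move=> [q v] [q' v'] /= eq_lift.
have eq_v : v = v' by rewrite -(lift_perm_id ord_max v q) eq_lift lift_perm_id.
rewrite -eq_v in eq_lift *; congr pair; apply/permP => j.
apply: (@lift_inj _ v).
by rewrite -(lift_perm_lift ord_max v q) -(lift_perm_lift ord_max v q') eq_lift.
Qed.

Lemma sum_count_mem_fringe_insert m j z :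
  \sum_(0 <= v < slots z) count_mem j (fringe_insert m v z) + j.+1 * count_mem j z =
  slots z * count_mem j z + sumn [seq a.+1 * count_mem j (grow_leaf m a) | a <- z].
Proof.
elim: z => [|a z IH]; first by rewrite big_geq // muln0.
have -> : slots (a :: z) = a.+1 + slots z by [].
rewrite (@big_cat_nat _ _ _ a.+1) //=; last exact: leq_addr.
rewrite (@eq_big_nat _ _ _ 0 a.+1 _
  (fun _ => count_mem j (grow_leaf m a) + count_mem j z)); last first.
  by move=> v /andP [_ lt_v]; rewrite /= -ltnS lt_v count_cat.
rewrite sum_nat_const_nat subn0 -[X in \sum_(X <= _ < _) _]add0n big_addn addKn.
rewrite (@eq_big_nat _ _ _ 0 (slots z) _
  (fun v => (a == j) + count_mem j (fringe_insert m v z))); last first.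
  move=> v _ /=; have -> : (v + a.+1 <= a) = false by apply/negbTE; rewrite -ltnNge; lia.
  by rewrite addnK /= eq_sym.
rewrite big_split /= sum_nat_const_nat subn0.
have diag : j.+1 * (a == j) = a.+1 * (a == j) by case: eqP => [->|]; rewrite ?muln0.
move: IH diag; set S := \sum_(0 <= v < slots z) _; set G := sumn _; set e := nat_of_bool _.
move: (count_mem j z) (count_mem j (grow_leaf m a)) (slots z) => c g s.
clearbody S G e; nia.
Qed.

Definition leaf_count m N j : nat := \sum_(p : 'S_N) count_mem j (leaf_profile m p).

Lemma leaf_count_rec m N j : 0 < m ->
  leaf_count m N.+1 j + j.+1 * leaf_count m N j =
  N.+1 * leaf_count m N j +
  \sum_(q : 'S_N) sumn [seq a.+1 * count_mem j (grow_leaf m a) | a <- leaf_profile m q].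
Proof.
move=> pos_m; rewrite /leaf_count (reindex _ (onW_bij _ (lift_perm_bij N))).
rewrite -(pair_bigA _ (fun q v => count_mem j (leaf_profile m (lift_perm ord_max v q)))) /=.
rewrite !big_distrr -!big_split /=; apply: eq_bigr => q _.
under eq_bigr => v _ do rewrite leaf_profile_lift //.
have := sum_count_mem_fringe_insert m j (leaf_profile m q).
by rewrite slots_leaf_profile // big_mkord.
Qed.

Lemma inflow_grow_leaf m j a : a <= 2 * m ->
  a.+1 * count_mem j (grow_leaf m a) =
  (if 0 < j <= 2 * m then j * (a == j.-1) else 0) +
  (if j == m then (4 * m).+2 * (a == 2 * m) else 0).
Proof.
rewrite /grow_leaf => le_a.
by case: (eqVneq a (2 * m)); case: (eqVneq j m); case: ifP => /=; lia.
Qed.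

Lemma sumn_inflow m j z : all (fun a => a <= 2 * m) z ->
  sumn [seq a.+1 * count_mem j (grow_leaf m a) | a <- z] =
  (if 0 < j <= 2 * m then j * count_mem j.-1 z else 0) +
  (if j == m then (4 * m).+2 * count_mem (2 * m) z else 0).
Proof.
elim: z => [|a z IH] /=; first by case: ifP; case: ifP; rewrite ?muln0.
case/andP=> le_a /IH ->; rewrite inflow_grow_leaf //.
by case: ifP; case: ifP; rewrite ?mulnDr /=; lia.
Qed.

Lemma leaf_count_succ m N j : 0 < m ->
  leaf_count m N.+1 j + j.+1 * leaf_count m N j =
  N.+1 * leaf_count m N j +
  ((if 0 < j <= 2 * m then j * leaf_count m N j.-1 else 0) +
   (if j == m then (4 * m).+2 * leaf_count m N (2 * m) else 0)).
Proof.
move=> pos_m; rewrite leaf_count_rec //; congr addn.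
rewrite (eq_bigr _ (fun q _ => sumn_inflow _ (leaf_profile_bounded q pos_m))) big_split /=.
by congr addn; case: ifP => _; rewrite ?big_distrr //= big1.
Qed.

Lemma leaf_count_0 m j : leaf_count m 0 j = (j == 0).
Proof.
rewrite /leaf_count (eq_bigr (fun _ => (j == 0 : nat))).
  by rewrite sum_nat_const card_Sn mul1n.
move=> p _; rewrite /leaf_profile.
have -> : perm_keys p = [::] by apply/nilP; rewrite /nilp size_map size_enum_ord.
by rewrite /= addn0 eq_sym.
Qed.

(** * Order 5 *)

Lemma sumn_map_count_mem_le4 (f : nat -> nat) z : all (fun a => a <= 4) z ->
  sumn (map f z) = f 0 * count_mem 0 z + f 1 * count_mem 1 z + f 2 * count_mem 2 z
                   + f 3 * count_mem 3 z + f 4 * count_mem 4 z.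
Proof.
elim: z => [|a z IH] /=; first by rewrite !muln0.
case/andP => le_a /IH ->; case: a le_a => [|[|[|[|[|a]]]]] // _ /=; rewrite !mulnDr; lia.
Qed.

Lemma slots_leaf_count2 N :
  1 * leaf_count 2 N 0 + 2 * leaf_count 2 N 1 + 3 * leaf_count 2 N 2 +
  4 * leaf_count 2 N 3 + 5 * leaf_count 2 N 4 = N.+1 * N`!.
Proof.
rewrite /leaf_count !big_distrr -!big_split mulnC -[N`!]card_Sn -sum_nat_const /=.
apply: eq_bigr => p _; rewrite -(slots_leaf_profile p (isT : 0 < 2)).
by rewrite /slots (sumn_map_count_mem_le4 _ (@leaf_profile_bounded 2 _ p isT)).
Qed.

Lemma sum_Lm2 N : \sum_(p : 'S_N) Lm 2 p =
  leaf_count 2 N 0 + leaf_count 2 N 1 + leaf_count 2 N 2 + leaf_count 2 N 3 + leaf_count 2 N 4.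
Proof.
rewrite /leaf_count -!big_split /=; apply: eq_bigr => p _.
rewrite /Lm nleaves_leaf_sizes -/(leaf_profile 2 p).
have := sumn_map_count_mem_le4 (fun _ => 1) (@leaf_profile_bounded 2 _ p isT).
by rewrite sumnE big_map sum1_size !mul1n.
Qed.

Open Scope R_scope.

Definition mean_count (N j : nat) : R := INR (leaf_count 2 N j) / INR N`!.

Lemma INR_fact_gt0 N : 0 < INR N`!.
Proof. by apply/lt_0_INR/ltP; exact: fact_gt0. Qed.

Lemma ratio_fact_succ (N a b c k : nat) : (a + k * b = N.+1 * b + c)%nat ->
  INR a / INR N.+1`! =
  INR b / INR N`! + (INR c / INR N`! - INR k * (INR b / INR N`!)) / INR N.+1.
Proof.
rewrite factS mult_INR S_INR => /(congr1 INR); rewrite !plus_INR !mult_INR => eq_a.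
have := INR_fact_gt0 N; have := pos_INR N => ? ?.
have -> : INR a = INR b + INR N * INR b + INR c - INR k * INR b by lra.
by field; lra.
Qed.

Lemma mean_count_succ N j : mean_count N.+1 j = mean_count N j +
  ((if (0 < j <= 4)%nat then INR j * mean_count N j.-1 else 0) +
   (if j == 2%nat then 10 * mean_count N 4 else 0) - INR j.+1 * mean_count N j) / INR N.+1.
Proof.
rewrite /mean_count (ratio_fact_succ (leaf_count_succ N j (isT : (0 < 2)%nat))) plus_INR.
have := INR_fact_gt0 N; have e10 : INR (4 * 2).+2 = 10 by rewrite INR_IZR_INZ.
change (2 * 2)%nat with 4%nat.
have : 0 < INR N.+1 by apply/lt_0_INR/ltP.
by case: ifP => _; case: ifP => _ ? ?; rewrite ?mult_INR ?e10 ?plus_INR ?INR_0; field; lra.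
Qed.

Lemma mean_count_0 j : mean_count 0 j = if j == 0%nat then 1 else 0.
Proof. by rewrite /mean_count leaf_count_0; case: eqP => _ /=; field. Qed.

Lemma mean_count_succ_cases N :
  [/\ mean_count N.+1 0 = mean_count N 0 - mean_count N 0 / (INR N + 1),
      mean_count N.+1 1 = mean_count N 1 + (mean_count N 0 - 2 * mean_count N 1) / (INR N + 1),
      mean_count N.+1 2 = mean_count N 2 +
        (2 * mean_count N 1 + 10 * mean_count N 4 - 3 * mean_count N 2) / (INR N + 1),
      mean_count N.+1 3 =
        mean_count N 3 + (3 * mean_count N 2 - 4 * mean_count N 3) / (INR N + 1) &
      mean_count N.+1 4 =
        mean_count N 4 + (4 * mean_count N 3 - 5 * mean_count N 4) / (INR N + 1)].
Proof.
have := pos_INR N; rewrite !mean_count_succ !S_INR /= => ?.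
by split; field; lra.
Qed.

Lemma mean_count_small N : (2 <= N)%nat -> mean_count N 0 = 0 /\ mean_count N 1 = 0.
Proof.
elim: N => [|N IH] //; rewrite leq_eqVlt => /orP [/eqP <-|/IH [mu0 mu1]].
  case: (mean_count_succ_cases 1) (mean_count_succ_cases 0) => -> -> _ _ _ [-> -> _ _ _].
  by rewrite !mean_count_0 /=; split; field.
case: (mean_count_succ_cases N) => -> -> _ _ _; rewrite mu0 mu1.
by split; field; have := pos_INR N; lra.
Qed.

Lemma mean_count_slots N :
  mean_count N 0 + 2 * mean_count N 1 + 3 * mean_count N 2 + 4 * mean_count N 3 +
  5 * mean_count N 4 = INR N + 1.
Proof.
have := congr1 INR (slots_leaf_count2 N); rewrite !mult_INR !plus_INR S_INR /mean_count /=.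
have := INR_fact_gt0 N; set F := INR N`! => pos_F eq_slots.
apply: (Rmult_eq_reg_r F); last lra.
rewrite -eq_slots; field; lra.
Qed.

Lemma ELm2_mean_counts N :
  ELm 2 N = mean_count N 0 + mean_count N 1 + mean_count N 2 + mean_count N 3 + mean_count N 4.
Proof. by rewrite /ELm sum_Lm2 !plus_INR /mean_count; field; have := INR_fact_gt0 N; lra. Qed.

(* (5, 3)(N + 1)/37 is the fixed point of the recurrence for (mean_count N 2, mean_count N 3)
   once mean_count N 4 is eliminated by [mean_count_slots]. *)
Definition lyapunov_form (a b : R) : R := 3 * (a * a) + 5 * (a * b) + 8 * (b * b).

Definition lyapunov (N : nat) : R :=
  lyapunov_form (mean_count N 2 - 5 * (INR N + 1) / 37) (mean_count N 3 - 3 * (INR N + 1) / 37).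

Lemma lyapunov_form_ge0 a b : 0 <= lyapunov_form a b.
Proof. rewrite /lyapunov_form; nra. Qed.

Lemma lyapunov_ge0 N : 0 <= lyapunov N.
Proof. exact: lyapunov_form_ge0. Qed.

Lemma lyapunov_succ N : (2 <= N)%nat ->
  lyapunov N.+1 = (1 - 13 / (INR N + 1) + 60 / ((INR N + 1) * (INR N + 1))) * lyapunov N.
Proof.
move=> le2N; have [mu0 mu1] := mean_count_small le2N.
have := mean_count_slots N; rewrite mu0 mu1 => slots_N.
have mu4 : mean_count N 4 = (INR N + 1 - 3 * mean_count N 2 - 4 * mean_count N 3) / 5 by lra.
rewrite /lyapunov S_INR; case: (mean_count_succ_cases N) => _ _ -> -> _.
rewrite mu1 mu4 /lyapunov_form; field; have := pos_INR N; lra.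
Qed.

Fixpoint rising (t : R) (n : nat) : R := if n is n'.+1 then (t + INR n) * rising t n' else 1.

Lemma risingS t n : rising t n.+1 = (t + INR n.+1) * rising t n.
Proof. by []. Qed.

Lemma rising_shift t n : rising (t + 1) n * (t + 1) = rising t n * (t + 1 + INR n).
Proof.
elim: n => [|n IH]; first by rewrite /= Rplus_0_r.
by rewrite !risingS Rmult_assoc IH S_INR; ring.
Qed.

Lemma rising_ge_pow t n : 0 <= t -> t ^ n <= rising t n.
Proof.
move=> t_ge0; elim: n => [|n IH]; first by rewrite /=; lra.
rewrite risingS -tech_pow_Rmult; apply: Rmult_le_compat => //; first exact: pow_le.
by have := pos_INR n.+1; lra.
Qed.

Lemma rising_ge0 t n : 0 <= t -> 0 <= rising t n.
Proof. by move=> t_ge0; apply: Rle_trans (rising_ge_pow n t_ge0); apply: pow_le. Qed.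

Lemma contraction_factor_le1 K : 8 <= K ->
  (1 - 13 / K + 60 / (K * K)) * ((K + 13) / K) <= 1.
Proof.
move=> le8K; have pos_K3 : 0 < K * K * K by apply: Rmult_lt_0_compat; nra.
apply: (Rmult_le_reg_r _ _ _ pos_K3).
have -> : (1 - 13 / K + 60 / (K * K)) * ((K + 13) / K) * (K * K * K) =
  K * K * K - 109 * K + 780 by field; lra.
lra.
Qed.

Lemma INR_13 : INR 13 = 13.
Proof. by rewrite INR_IZR_INZ. Qed.

(* [rising (INR N) 13] grows by the factor (N + 14)/(N + 1), which beats the contraction
   of [lyapunov_succ] from N = 7 on. *)
Lemma lyapunov_rising_succ_le N : (7 <= N)%nat ->
  lyapunov N.+1 * rising (INR N.+1) 13 <= lyapunov N * rising (INR N) 13.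
Proof.
move=> le7N; rewrite lyapunov_succ ?(leq_trans _ le7N) // S_INR.
have le8K : 8 <= INR N + 1.
  by have := le_INR _ _ (ssrnat.leP le7N); rewrite INR_IZR_INZ /=; lra.
have shift : rising (INR N + 1) 13 = rising (INR N) 13 * ((INR N + 1 + 13) / (INR N + 1)).
  apply: (Rmult_eq_reg_r (INR N + 1)); last lra.
  by rewrite rising_shift INR_13; field; lra.
have : 0 <= lyapunov N * rising (INR N) 13.
  by apply: Rmult_le_pos; [exact: lyapunov_ge0 | exact/rising_ge0/pos_INR].
by rewrite shift; have := contraction_factor_le1 le8K; nra.
Qed.

Lemma lyapunov_rising_le N : (7 <= N)%nat ->
  lyapunov N * rising (INR N) 13 <= lyapunov 7 * rising (INR 7) 13.
Proof.
elim: N => [|N IH] //; rewrite leq_eqVlt => /orP [/eqP <-|lt7N]; first lra.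
exact: Rle_trans (lyapunov_rising_succ_le lt7N) (IH lt7N).
Qed.

Lemma ELm2_error_sqr_le N : (2 <= N)%nat ->
  let err := ELm 2 N - 10 * (INR N + 1) / 37 in err * err <= lyapunov N.
Proof.
move=> le2N err; have [mu0 mu1] := mean_count_small le2N.
have := mean_count_slots N; rewrite /lyapunov /lyapunov_form mu0 mu1 => slots_N.
set a := mean_count N 2 - _; set b := mean_count N 3 - _.
have -> : err = (2 * a + b) / 5 by rewrite /err ELm2_mean_counts mu0 mu1 /a /b; lra.
nra.
Qed.

Lemma Rabs_le_sqrt_Rpower e K t a : 0 < t -> 0 <= K ->
  e * e * Rpower t (2 * a) <= K -> Rabs e <= sqrt K * Rpower t (- a).
Proof.
move=> pos_t K_ge0 le_eK; set r := Rpower t (- a).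
have pos_r : 0 < r by apply: exp_pos.
have inv_r : r * r * Rpower t (2 * a) = 1.
  by rewrite /r -!Rpower_plus (_ : - a + - a + 2 * a = 0) ?Rpower_O //; ring.
have sq_le : e * e <= (sqrt K * r) * (sqrt K * r).
  have -> : sqrt K * r * (sqrt K * r) = sqrt K * sqrt K * (r * r) by ring.
  rewrite sqrt_sqrt //; have : 0 < r * r by nra.
  nra.
apply: Rle_trans (Rsqr_le_abs_0 _ _ sq_le) (Req_le _ _ (Rabs_pos_eq _ _)).
by apply: Rmult_le_pos; [exact: sqrt_pos | lra].
Qed.

Theorem mainTheorem11 :
  exists C : R, exists N0 : nat, forall N : nat, (N0 <= N)%coq_nat ->
    (Rabs (ELm 2 N - 10 * (INR N + 1) / 37) <= C * Rpower (INR N) (- (13 / 2)))%R.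
Proof.
set K := lyapunov 7 * rising (INR 7) 13.
exists (sqrt K), 7%nat => N /ssrnat.leP le7N.
have pos_N : 0 < INR N by apply/lt_0_INR/ltP; lia.
have K_ge0 : 0 <= K by apply: Rmult_le_pos; [exact: lyapunov_ge0 | exact/rising_ge0/pos_INR].
apply: Rabs_le_sqrt_Rpower => //.
rewrite (_ : 2 * (13 / 2) = INR 13); last by rewrite INR_13; field.
rewrite Rpower_pow //.
apply: Rle_trans (lyapunov_rising_le le7N).
apply: Rmult_le_compat; [exact: Rle_0_sqr | apply: pow_le; lra | |].
- by apply: ELm2_error_sqr_le; lia.
- by apply: rising_ge_pow; lra.
Qed.
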